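(* Let $f,\tilde f,g,\tilde g,h,\tilde h,b,c$ be functions of two variables satisfying $b(u,v)=c(u,v)$, $g(u,v)=h(u,v)$, $\tilde g(u,v)=\tilde h(u,v)$. Let $q(n_1,n_2;y,z)$, $(n_1,n_2)\in\mathbb Z^2$, satisfy for all $y,z$ the 7-point equation $$f(q,q_{1,0})-\tilde f(q,q_{-1,0})+g(q,q_{0,1})-\tilde g(q,q_{0,-1})+h(q,q_{-1,-1})-\tilde h(q,q_{1,1})=0$$ at every site, together with the flows $$q_{,y}=b\bigl(q,-\tilde f(q,q_{-1,0})+g(q,q_{0,1})-\tilde h(q,q_{1,1})\bigr)=b\bigl(q,-f(q,q_{1,0})+\tilde g(q,q_{0,-1})-h(q,q_{-1,-1})\bigr),$$ $$q_{,z}=c\bigl(q,-\tilde f(q,q_{-1,0})-\tilde g(q,q_{0,-1})+h(q,q_{-1,-1})\bigr)=c\bigl(q,-f(q,q_{1,0})-g(q,q_{0,1})+\tilde h(q,q_{1,1})\bigr).$$ Fix an integer $j$ and set $u(2k)=q(k,j)$, $u(2k-1)=q(k,j+1)$ for $k\in\mathbb Z$. Then $u_{,t}:=u_{,y}+u_{,z}$ satisfies, at every $n\in\mathbb Z$ (both even and odd), the autonomous equation $$u_{,t}=b\bigl(u,-\tilde f(u,u_{-2})+g(u,u_{-1})-\tilde g(u,u_1)\bigr)+b\bigl(u,-f(u,u_2)-g(u,u_{-1})+\tilde g(u,u_1)\bigr),$$ where $u=u(n)$, $u_m=u(n+m)$.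
   Context: Notation: $q_{i,j}=q(n_1+i,n_2+j)$; subscripts ${,y},{,z},{,t}$ denote derivatives in $y,z,t$. *)

From Stdlib Require Import Reals ZArith.
From Coquelicot Require Import Coquelicot.
Open Scope R_scope.

Definition field2 := Z -> Z -> R -> R -> R.

(* u(2k) = q(k,j), u(2k-1) = q(k,j+1) (Z.div is floor division, so for
   n = 2k-1 we get (n+1)/2 = k). *)
Definition zigzag (q : field2) (j : Z) (n : Z) (y z : R) : R :=
  if Z.even n then q (n / 2)%Z j y z else q ((n + 1) / 2)%Z (j + 1)%Z y z.

From Stdlib Require Import Reals ZArith Lia FunctionalExtensionality.
From Coquelicot Require Import Coquelicot.
Open Scope R_scope.

(* Once c = b, h = g and h~ = g~, each flow has an upper form, whose arguments
   are among q_{-1,0}, q_{1,0}, q_{0,1}, q_{1,1}, and a lower form, whose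
   arguments are among q_{-1,0}, q_{1,0}, q_{0,-1}, q_{-1,-1} (the first form of
   the y-flow and the second of the z-flow are the upper ones).  At an even site
   u = q(k,j) of the zigzag, u_{-2}, u_{-1}, u_1, u_2 are q_{-1,0}, q_{0,1},
   q_{1,1}, q_{1,0}, so u_t is the sum of the upper forms; at an odd site
   u = q(k,j+1) they are q_{-1,0}, q_{-1,-1}, q_{0,-1}, q_{1,0}, and u_t is the
   sum of the lower forms. *)

Lemma zigzag_even (q : field2) (j k : Z) : zigzag q j (2 * k) = q k j.
Proof.
  unfold zigzag.
  rewrite Z.even_mul, Z.mul_comm, Z.div_mul by lia.
  reflexivity.
Qed.

Lemma zigzag_odd (q : field2) (j k : Z) : zigzag q j (2 * k - 1) = q k (j + 1)%Z.
Proof.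
  unfold zigzag.
  rewrite Z.even_sub, Z.even_mul.
  replace (2 * k - 1 + 1)%Z with (k * 2)%Z by ring.
  rewrite Z.div_mul by lia.
  reflexivity.
Qed.

Lemma is_derive_partials_sum (F : R -> R -> R) (y z dy dz : R) :
  is_derive (fun y' => F y' z) y dy -> is_derive (fun z' => F y z') z dz ->
  ex_derive (fun y' => F y' z) y /\ ex_derive (fun z' => F y z') z /\
  Derive (fun y' => F y' z) y + Derive (fun z' => F y z') z = dy + dz.
Proof.
  intros Dy Dz.
  split; [exists dy; exact Dy |].
  split; [exists dz; exact Dz |].
  f_equal; now apply is_derive_unique.
Qed.

Section ZigzagReduction.

Variables (f ft g gt b : R -> R -> R) (q : field2).

Hypothesis q_y_up : forall (n1 n2 : Z) (y z : R),
  is_derive (fun y' => q n1 n2 y' z) y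
    (b (q n1 n2 y z)
       (- ft (q n1 n2 y z) (q (n1 - 1)%Z n2 y z)
        + g (q n1 n2 y z) (q n1 (n2 + 1)%Z y z)
        - gt (q n1 n2 y z) (q (n1 + 1)%Z (n2 + 1)%Z y z))).

Hypothesis q_y_down : forall (n1 n2 : Z) (y z : R),
  is_derive (fun y' => q n1 n2 y' z) y
    (b (q n1 n2 y z)
       (- f (q n1 n2 y z) (q (n1 + 1)%Z n2 y z)
        + gt (q n1 n2 y z) (q n1 (n2 - 1)%Z y z)
        - g (q n1 n2 y z) (q (n1 - 1)%Z (n2 - 1)%Z y z))).

Hypothesis q_z_down : forall (n1 n2 : Z) (y z : R),
  is_derive (fun z' => q n1 n2 y z') z
    (b (q n1 n2 y z)
       (- ft (q n1 n2 y z) (q (n1 - 1)%Z n2 y z)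
        - gt (q n1 n2 y z) (q n1 (n2 - 1)%Z y z)
        + g (q n1 n2 y z) (q (n1 - 1)%Z (n2 - 1)%Z y z))).

Hypothesis q_z_up : forall (n1 n2 : Z) (y z : R),
  is_derive (fun z' => q n1 n2 y z') z
    (b (q n1 n2 y z)
       (- f (q n1 n2 y z) (q (n1 + 1)%Z n2 y z)
        - g (q n1 n2 y z) (q n1 (n2 + 1)%Z y z)
        + gt (q n1 n2 y z) (q (n1 + 1)%Z (n2 + 1)%Z y z))).

Variable j : Z.

Definition zigzag_rhs (n : Z) (y z : R) : R :=
  let u := fun (m : Z) => zigzag q j (n + m)%Z y z in
  b (u 0%Z) (- ft (u 0%Z) (u (-2)%Z) + g (u 0%Z) (u (-1)%Z) - gt (u 0%Z) (u 1%Z))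
  + b (u 0%Z) (- f (u 0%Z) (u 2%Z) - g (u 0%Z) (u (-1)%Z) + gt (u 0%Z) (u 1%Z)).

Lemma zigzag_flow_even (k : Z) (y z : R) :
  ex_derive (fun y' => zigzag q j (2 * k) y' z) y /\
  ex_derive (fun z' => zigzag q j (2 * k) y z') z /\
  Derive (fun y' => zigzag q j (2 * k) y' z) y
  + Derive (fun z' => zigzag q j (2 * k) y z') z = zigzag_rhs (2 * k) y z.
Proof.
  unfold zigzag_rhs; cbv beta.
  replace (2 * k + 0)%Z with (2 * k)%Z by ring.
  replace (2 * k + -2)%Z with (2 * (k - 1))%Z by ring.
  replace (2 * k + -1)%Z with (2 * k - 1)%Z by ring.
  replace (2 * k + 1)%Z with (2 * (k + 1) - 1)%Z by ring.
  replace (2 * k + 2)%Z with (2 * (k + 1))%Z by ring.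
  rewrite !zigzag_even, !zigzag_odd.
  exact (is_derive_partials_sum _ y z _ _ (q_y_up k j y z) (q_z_up k j y z)).
Qed.

Lemma zigzag_flow_odd (k : Z) (y z : R) :
  ex_derive (fun y' => zigzag q j (2 * k - 1) y' z) y /\
  ex_derive (fun z' => zigzag q j (2 * k - 1) y z') z /\
  Derive (fun y' => zigzag q j (2 * k - 1) y' z) y
  + Derive (fun z' => zigzag q j (2 * k - 1) y z') z = zigzag_rhs (2 * k - 1) y z.
Proof.
  unfold zigzag_rhs; cbv beta.
  replace (2 * k - 1 + 0)%Z with (2 * k - 1)%Z by ring.
  replace (2 * k - 1 + -2)%Z with (2 * (k - 1) - 1)%Z by ring.
  replace (2 * k - 1 + -1)%Z with (2 * (k - 1))%Z by ring.
  replace (2 * k - 1 + 1)%Z with (2 * k)%Z by ring.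
  replace (2 * k - 1 + 2)%Z with (2 * (k + 1) - 1)%Z by ring.
  rewrite !zigzag_even, !zigzag_odd.
  destruct (is_derive_partials_sum _ y z _ _
              (q_y_down k (j + 1) y z) (q_z_down k (j + 1) y z)) as (Ey & Ez & ->).
  repeat split; trivial.
  replace (j + 1 - 1)%Z with j by ring.
  rewrite Rplus_comm; f_equal; f_equal; ring.
Qed.


End ZigzagReduction.

Theorem mainTheorem2
  (f ft g gt h ht b c : R -> R -> R)
  (hbc : forall s w, b s w = c s w)
  (hgh : forall s w, g s w = h s w)
  (hgtht : forall s w, gt s w = ht s w)
  (q : Z -> Z -> R -> R -> R)
  (Hlat : forall (n1 n2 : Z) (y z : R),
     f (q n1 n2 y z) (q (n1 + 1)%Z n2 y z) - ft (q n1 n2 y z) (q (n1 - 1)%Z n2 y z)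
     + g (q n1 n2 y z) (q n1 (n2 + 1)%Z y z) - gt (q n1 n2 y z) (q n1 (n2 - 1)%Z y z)
     + h (q n1 n2 y z) (q (n1 - 1)%Z (n2 - 1)%Z y z)
     - ht (q n1 n2 y z) (q (n1 + 1)%Z (n2 + 1)%Z y z) = 0)
  (Hy : forall (n1 n2 : Z) (y z : R),
     is_derive (fun y' => q n1 n2 y' z) y
       (b (q n1 n2 y z)
          (- ft (q n1 n2 y z) (q (n1 - 1)%Z n2 y z)
           + g (q n1 n2 y z) (q n1 (n2 + 1)%Z y z)
           - ht (q n1 n2 y z) (q (n1 + 1)%Z (n2 + 1)%Z y z))))
  (Hy' : forall (n1 n2 : Z) (y z : R),
     b (q n1 n2 y z)
       (- ft (q n1 n2 y z) (q (n1 - 1)%Z n2 y z)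
        + g (q n1 n2 y z) (q n1 (n2 + 1)%Z y z)
        - ht (q n1 n2 y z) (q (n1 + 1)%Z (n2 + 1)%Z y z))
     = b (q n1 n2 y z)
       (- f (q n1 n2 y z) (q (n1 + 1)%Z n2 y z)
        + gt (q n1 n2 y z) (q n1 (n2 - 1)%Z y z)
        - h (q n1 n2 y z) (q (n1 - 1)%Z (n2 - 1)%Z y z)))
  (Hz : forall (n1 n2 : Z) (y z : R),
     is_derive (fun z' => q n1 n2 y z') z
       (c (q n1 n2 y z)
          (- ft (q n1 n2 y z) (q (n1 - 1)%Z n2 y z)
           - gt (q n1 n2 y z) (q n1 (n2 - 1)%Z y z)
           + h (q n1 n2 y z) (q (n1 - 1)%Z (n2 - 1)%Z y z))))
  (Hz' : forall (n1 n2 : Z) (y z : R),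
     c (q n1 n2 y z)
       (- ft (q n1 n2 y z) (q (n1 - 1)%Z n2 y z)
        - gt (q n1 n2 y z) (q n1 (n2 - 1)%Z y z)
        + h (q n1 n2 y z) (q (n1 - 1)%Z (n2 - 1)%Z y z))
     = c (q n1 n2 y z)
       (- f (q n1 n2 y z) (q (n1 + 1)%Z n2 y z)
        - g (q n1 n2 y z) (q n1 (n2 + 1)%Z y z)
        + ht (q n1 n2 y z) (q (n1 + 1)%Z (n2 + 1)%Z y z)))
  (j : Z) :
  forall (n : Z) (y z : R),
    let u := fun (m : Z) => zigzag q j (n + m)%Z y z in
    ex_derive (fun y' => zigzag q j n y' z) y /\
    ex_derive (fun z' => zigzag q j n y z') z /\
    Derive (fun y' => zigzag q j n y' z) y + Derive (fun z' => zigzag q j n y z') z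
    = b (u 0%Z) (- ft (u 0%Z) (u (-2)%Z) + g (u 0%Z) (u (-1)%Z) - gt (u 0%Z) (u 1%Z))
      + b (u 0%Z) (- f (u 0%Z) (u 2%Z) - g (u 0%Z) (u (-1)%Z) + gt (u 0%Z) (u 1%Z)).
Proof.
  assert (c = b) by (extensionality s; extensionality w; symmetry; apply hbc).
  assert (h = g) by (extensionality s; extensionality w; symmetry; apply hgh).
  assert (ht = gt) by (extensionality s; extensionality w; symmetry; apply hgtht).
  subst c h ht.
  assert (q_y_down : forall n1 n2 y z, is_derive (fun y' => q n1 n2 y' z) y
    (b (q n1 n2 y z)
       (- f (q n1 n2 y z) (q (n1 + 1)%Z n2 y z)
        + gt (q n1 n2 y z) (q n1 (n2 - 1)%Z y z)
        - g (q n1 n2 y z) (q (n1 - 1)%Z (n2 - 1)%Z y z))))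
    by (intros; rewrite <- Hy'; apply Hy).
  assert (q_z_up : forall n1 n2 y z, is_derive (fun z' => q n1 n2 y z') z
    (b (q n1 n2 y z)
       (- f (q n1 n2 y z) (q (n1 + 1)%Z n2 y z)
        - g (q n1 n2 y z) (q n1 (n2 + 1)%Z y z)
        + gt (q n1 n2 y z) (q (n1 + 1)%Z (n2 + 1)%Z y z))))
    by (intros; rewrite <- Hz'; apply Hz).
  intros n y z.
  destruct (Z.Even_or_Odd n) as [[k ->] | [k ->]].
  - exact (zigzag_flow_even f ft g gt b q Hy q_z_up j k y z).
  - replace (2 * k + 1)%Z with (2 * (k + 1) - 1)%Z by ring.
    exact (zigzag_flow_odd f ft g gt b q q_y_down Hz j (k + 1) y z).
Qed.
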